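(* For every integer $d\ge 0$, $$\frac14\sum_{\ell=0}^{\lfloor d/3\rfloor}\;\sum_{m=0}^{\lfloor (d-3\ell)/2\rfloor}(d-3\ell-2m+1)^2(m+1)^2(d-3\ell-m+2)^2=\binom{d+8}{d}.$$ *)

From mathcomp Require Import all_boot all_order all_algebra.

From mathcomp Require Import all_boot all_order all_algebra.
From mathcomp Require Import ring zify.
Import GRing.Theory Num.Theory.
Local Open Scope ring_scope.

(* Write r(x) = (x+1)(x+2)...(x+8), so that r(n) = 8! C(n+8, n).  Summing the
   inner sum over m in closed form (Faulhaber), separately for n even and odd,
   gives 10080 * (inner sum at n) = r(n) - r(n-3).  The outer sum over l then
   telescopes to r(d) - r(d - 3 (d/3 + 1)), and the last term vanishes because
   d - 3 (d/3 + 1) lies in {-3, -2, -1}.  Finally 8! = 4 * 10080. *)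

Section InnerSum.

Variable R : comPzRingType.

Definition inner_term (n m : R) : R :=
  (n - 2 * m + 1) ^+ 2 * (m + 1) ^+ 2 * (n - m + 2) ^+ 2.

(* [210 * \sum_(0 <= m < K) inner_term n m], as a polynomial in [n] and [K]. *)
Definition inner_partial_sum (n K : R) : R :=
  K * (35 * n ^+ 4 + 420 * n ^+ 3 + 1799 * n ^+ 2 + 3234 * n + 2036
   + K * (105 * n ^+ 4 + 945 * n ^+ 3 + 2835 * n ^+ 2 + 3045 * n + 630)
   + K ^+ 2 * (70 * n ^+ 4 + 210 * n ^+ 3 - 980 * n ^+ 2 - 3990 * n - 3290)
   + K ^+ 3 * (- 315 * n ^+ 3 - 1470 * n ^+ 2 - 1365 * n + 630)
   + K ^+ 4 * (546 * n ^+ 2 + 2016 * n + 1554)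
   + K ^+ 5 * (- 420 * n - 840)
   + K ^+ 6 * 120).

Lemma sum_inner_term (n : R) (K : nat) :
  210 * \sum_(0 <= m < K) inner_term n m%:R = inner_partial_sum n K%:R.
Proof.
rewrite mulr_sumr (telescope_sumr_eq (inner_partial_sum n \o GRing.natmul 1)) //.
  by rewrite /= /inner_partial_sum !mul0r subr0.
by move=> m _; rewrite /= -natr1 /inner_partial_sum /inner_term; ring.
Qed.

Definition rising8 (x : R) : R :=
  (x + 1) * (x + 2) * (x + 3) * (x + 4) * (x + 5) * (x + 6) * (x + 7) * (x + 8).

Lemma rising8_neg_nat (j : nat) : (0 < j <= 8)%N -> rising8 (- j%:R) = 0.
Proof.
by case: j => [|[|[|[|[|[|[|[|[|j]]]]]]]]] //= _; rewrite /rising8; ring.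
Qed.

Lemma rising8_nat (n : nat) : rising8 n%:R = 'C(n + 8, n)%:R * (8`!)%:R.
Proof.
have := bin_sub (leq_addl n 8); rewrite addnK => ->; rewrite -natrM bin_ffact.
have -> : (n + 8 = n.+4.+4)%N by rewrite addnC.
by rewrite !ffactnS ffactn0 /rising8 !natrM -!natr1; ring.
Qed.

Definition inner_sum (n : nat) : R :=
  \sum_(0 <= m < (n %/ 2).+1)
    (((n - 2 * m + 1) ^ 2 * (m + 1) ^ 2 * (n - m + 2) ^ 2)%N)%:R.

Lemma natr_inner_term (n m : nat) : (2 * m <= n)%N ->
  (((n - 2 * m + 1) ^ 2 * (m + 1) ^ 2 * (n - m + 2) ^ 2)%N)%:R
  = inner_term n%:R m%:R.
Proof.
move=> le2mn; rewrite /inner_term !(natrM, natrX, natrD) !natrB ?natrM //; lia.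
Qed.

Lemma inner_sumE (n : nat) :
  210 * inner_sum n = inner_partial_sum n%:R (n %/ 2).+1%:R.
Proof.
rewrite -sum_inner_term; congr (_ * _); apply: eq_big_nat => m /andP[_ ltm].
by rewrite natr_inner_term //; lia.
Qed.

Lemma inner_sum_rising8 (n : nat) :
  10080 * inner_sum n = rising8 n%:R - rising8 (n%:R - 3).
Proof.
have -> : 10080 * inner_sum n = 48 * (210 * inner_sum n) by ring.
rewrite inner_sumE divn2 -natr1.
move: (odd_double_half n); move: (odd n) n./2 => b k <-.
rewrite -muln2 natrD natrM.
by case: b => /=; rewrite /inner_partial_sum /rising8; ring.
Qed.

Lemma sum_inner_sum (d : nat) :
  10080 * \sum_(0 <= l < (d %/ 3).+1) inner_sum (d - 3 * l) = rising8 d%:R.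
Proof.
pose f l := - rising8 (d%:R - 3 * l%:R).
rewrite mulr_sumr (telescope_sumr_eq f) //; last first.
  move=> l /andP[_ ltl]; rewrite inner_sum_rising8 natrB ?natrM -?natr1; last lia.
  by rewrite /f /rising8; ring.
rewrite /f mulr0n mulr0 subr0 opprK.
have -> : d%:R - 3 * (d %/ 3).+1%:R = - (3 - d %% 3)%:R :> R.
  have le_r3 : (d %% 3 <= 3)%N by rewrite ltnW // ltn_pmod.
  by rewrite (natrB _ le_r3) {1}(divn_eq d 3) natrD natrM -natr1; ring.
by rewrite rising8_neg_nat ?oppr0 ?add0r //; lia.
Qed.

End InnerSum.

Theorem lemma5p7 (d : nat) :
  (1 / 4 : rat) *
    \sum_(0 <= l < (d %/ 3).+1)
      \sum_(0 <= m < ((d - 3 * l) %/ 2).+1)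
        (((d - 3 * l - 2 * m + 1) ^ 2 * (m + 1) ^ 2 * (d - 3 * l - m + 2) ^ 2)%N)%:R
  = ('C(d + 8, d))%:R.
Proof.
have := sum_inner_sum rat d; rewrite rising8_nat => sum_eq.
apply: (mulIf (_ : (8`!)%:R != 0 :> rat)); first by rewrite pnatr_eq0 -lt0n fact_gt0.
rewrite -sum_eq -[\sum_(_ <= _ < _) _]/(\sum_(0 <= l < (d %/ 3).+1) inner_sum rat (d - 3 * l)).
by rewrite !factS fact0; field.
Qed.
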